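(* Let $\mathcal{H}$ be a complex Hilbert space, $H_1,H_2$ closed real linear subspaces with real orthogonal projections $E_1,E_2$, and set $X(E_1,E_2):=E_1+E_2-E_1\vee E_2$. (a) $X(E_1,E_2)$ is a real selfadjoint contraction with $\|X(E_1,E_2)\|=\|E_1E_2\|$. (b) $X(E_1,E_2)=0$ if and only if $E_1\le E_2^{\perp_{\mathbb{R}}}$. (c) If $E_1$ is standard and $E_1\le E_2'$, then $X(E_1,E_2)=0$ if and only if $E_2=0$.
   Context: Real orthogonal projections are real linear idempotents selfadjoint with respect to $\mathrm{Re}\langle\cdot,\cdot\rangle$. $E_1\vee E_2$ is the real orthogonal projection onto the closed real span of $H_1\cup H_2$. $E^{\perp_{\mathbb{R}}}=1-E$ is the projection onto the real orthogonal complement with respect to $\mathrm{Re}\langle\cdot,\cdot\rangle$. $E'=1+iEi$ is the projection onto the symplectic complement $\{\xi:\mathrm{Im}\langle\xi,h\rangle=0\ \forall h\in E\mathcal{H}\}$. $E\le F$ means $E\mathcal{H}\subset F\mathcal{H}$. $E$ (or its range $H$) is standard if $H\cap iH=\{0\}$ and $H+iH$ is dense in $\mathcal{H}$. *)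

From mathcomp Require Import all_boot all_order all_algebra.
From mathcomp Require Import boolp classical_sets reals.
From mathcomp Require Import complex.
Import GRing.Theory Num.Theory.

Set Implicit Arguments.
Unset Strict Implicit.
Unset Printing Implicit Defensive.

Local Open Scope ring_scope.
Local Open Scope classical_set_scope.

Section Hilbert.
Variables (R : realType) (V : lmodType R[i]).

Definition cRe (z : R[i]) : R := complex.Re z.

Definition rscale (r : R) (x : V) : V := (r%:C)%C *: x.

Definition is_inner_product (ip : V -> V -> R[i]) : Prop :=
  [/\ (forall (a : R[i]) (x y z : V), ip (a *: x + y) z = a * ip x z + ip y z),
      (forall x y : V, ip x y = (ip y x)^*),
      (forall x : V, 0 <= ip x x) &
      (forall x : V, ip x x = 0 -> x = 0)].

Variable ip : V -> V -> R[i].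

Definition hnorm (x : V) : R := Num.sqrt (cRe (ip x x)).

Definition hcauchy (u : nat -> V) : Prop :=
  forall e : R, 0 < e -> exists N : nat,
    forall m n : nat, (N <= m)%N -> (N <= n)%N -> hnorm (u m - u n) < e.

Definition hconverges_to (u : nat -> V) (l : V) : Prop :=
  forall e : R, 0 < e -> exists N : nat,
    forall n : nat, (N <= n)%N -> hnorm (u n - l) < e.

Definition is_hilbert : Prop :=
  is_inner_product ip /\
  (forall u : nat -> V, hcauchy u -> exists l : V, hconverges_to u l).

Definition hclosure (S : set V) : set V :=
  [set l | exists u : nat -> V, (forall n, S (u n)) /\ hconverges_to u l].

Definition hclosed (S : set V) : Prop := hclosure S `<=` S.

Definition real_subspace (H : set V) : Prop :=
  [/\ H 0,
      (forall x y, H x -> H y -> H (x + y)) &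
      (forall (r : R) x, H x -> H (rscale r x))].

Definition closed_real_subspace (H : set V) : Prop :=
  real_subspace H /\ hclosed H.

Definition closed_real_span2 (H1 H2 : set V) : set V :=
  hclosure [set x + y | x in H1 & y in H2].

Definition real_linear (T : V -> V) : Prop :=
  (forall x y, T (x + y) = T x + T y) /\
  (forall (r : R) x, T (rscale r x) = rscale r (T x)).

Definition re_selfadjoint (T : V -> V) : Prop :=
  forall x y, cRe (ip (T x) y) = cRe (ip x (T y)).

Definition real_orth_proj_onto (E : V -> V) (H : set V) : Prop :=
  [/\ real_linear E, (forall x, E (E x) = E x), re_selfadjoint E &
      range E = H].

Definition opnorm (T : V -> V) : R :=
  sup [set hnorm (T x) | x in [set x | hnorm x <= 1]].

Definition re_selfadjoint_contraction (T : V -> V) : Prop :=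
  [/\ real_linear T, re_selfadjoint T &
      (forall x, hnorm (T x) <= hnorm x)].

Definition proj_le (E F : V -> V) : Prop := range E `<=` range F.

Definition rperp (E : V -> V) : V -> V := fun x => x - E x.

(* E' = 1 + i E i  (symplectic complement) *)
Definition symp (E : V -> V) : V -> V := fun x => x + 'i *: E ('i *: x).

Definition standard (E : V -> V) : Prop :=
  (forall v, range E v -> range E ('i *: v) -> v = 0) /\
  hclosure [set x + 'i *: y | x in range E & y in range E] = setT.

Definition Xop (E1 E2 E12 : V -> V) : V -> V :=
  fun x => E1 x + E2 x - E12 x.

End Hilbert.

(* On the dense subspace H1 + H2 of the range of E1 \/ E2 one has
   X (u + v) = E2 u + E1 v.  With w := u + E1 v in H1, both
   X (u + v) = E2 w + (1 - E2) E1 v  and  u + v = w + (1 - E1) v  are orthogonal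
   decompositions.  Put c := ||E1 E2||, which is also the norm of E2 E1 = (E1 E2)^*.
   Then ||E2 w|| <= c ||w||, and ||E1 v||^2 = <E2 E1 v, v> gives
   ||E1 v||^2 - ||E2 E1 v||^2 <= c^2 (||v||^2 - ||E1 v||^2).  Adding these yields
   ||X (u + v)|| <= c ||u + v||, which extends to all vectors because X is
   Lipschitz and X = X (E1 \/ E2).  Conversely E1 E2 = X E2, so ||X|| = c.
   In particular X = 0 iff E2 E1 = 0, which gives (b).  Under the hypotheses
   of (c), E2 also kills i H1, and H1 + i H1 is dense. *)

From mathcomp Require Import all_boot all_order all_algebra.
From mathcomp Require Import boolp classical_sets reals.
From mathcomp Require Import complex.
From mathcomp Require Import lra.
Import Order.TTheory GRing.Theory Num.Theory.
Set Implicit Arguments.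
Unset Strict Implicit.
Local Open Scope ring_scope.
Local Open Scope classical_set_scope.

(* Multiply by [A^2] and use [B^4 <= A^2 C^2] and [B^2 <= c^2 A^2]. *)
Lemma sqr_gap_le (R : realFieldType) (A B C c : R) : 0 <= A -> 0 <= B -> 0 <= C ->
  B ^+ 2 <= A * C -> B <= c * A -> B <= A ->
  B ^+ 2 - C ^+ 2 <= c ^+ 2 * (A ^+ 2 - B ^+ 2).
Proof.
move=> A_ge0 B_ge0 C_ge0 B2_le BcA BA.
have [A0|A_neq0] := eqVneq A 0.
  have B0 : B = 0 by apply/le_anti; rewrite B_ge0 -A0 BA.
  by rewrite A0 B0 expr0n subr0 sub0r mulr0 oppr_le0 sqr_ge0.
have A_gt0 : 0 < A by rewrite lt0r A_neq0.
have B4_le : B ^+ 2 * B ^+ 2 <= A ^+ 2 * C ^+ 2.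
  have := ler_pM (sqr_ge0 B) (sqr_ge0 B) B2_le B2_le.
  by rewrite [X in _ <= X -> _]mulrACA -!expr2.
have B2_le_cA2 : B ^+ 2 <= c ^+ 2 * A ^+ 2.
  by rewrite -exprMn ler_pXn2r ?nnegrE // (le_trans B_ge0 BcA).
have BA2 : B ^+ 2 <= A ^+ 2 by rewrite ler_pXn2r ?nnegrE.
rewrite -(ler_pM2l (exprn_gt0 2 A_gt0)).
nra.
Qed.

Section InnerProduct.
Variables (R : realType) (V : lmodType R[i]) (ip : V -> V -> R[i]).
Hypothesis ip_inner : is_inner_product ip.

Local Notation re_ip x y := (cRe (ip x y)).
Local Notation hn := (hnorm ip).

Lemma cReD (a b : R[i]) : cRe (a + b) = cRe a + cRe b.
Proof. by case: a b => [? ?] [? ?]. Qed.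

Lemma cRe_realM (a : R) (b : R[i]) : cRe ((a%:C)%C * b) = a * cRe b.
Proof. case: b => [? ?] /=; lra. Qed.

Lemma cReJ (a : R[i]) : cRe (a^*)%C = cRe a.
Proof. by case: a. Qed.

Lemma ipD x y z : ip (x + y) z = ip x z + ip y z.
Proof. by case: ip_inner => lin _ _ _; have := lin 1 x y z; rewrite scale1r mul1r. Qed.

Lemma ipZ a x z : ip (a *: x) z = a * ip x z.
Proof.
case: ip_inner => lin _ _ _.
have ip0 : ip 0 z = 0 by apply/(addrI (ip 0 z)); rewrite -ipD !addr0.
by rewrite -[a *: x]addr0 lin ip0 addr0.
Qed.

Lemma re_ipD x y z : re_ip (x + y) z = re_ip x z + re_ip y z.
Proof. by rewrite ipD cReD. Qed.

Lemma re_ipC x y : re_ip x y = re_ip y x.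
Proof. by case: ip_inner => _ conj _ _; rewrite conj cReJ. Qed.

Lemma re_ipZ a x z : re_ip (rscale a x) z = a * re_ip x z.
Proof. by rewrite /rscale ipZ cRe_realM. Qed.

Lemma re_ip0 z : re_ip 0 z = 0.
Proof. by rewrite -(scale0r 0) -/(rscale 0 0) re_ipZ mul0r. Qed.

Lemma re_ipN x z : re_ip (- x) z = - re_ip x z.
Proof. by apply/(addrI (re_ip x z)); rewrite -re_ipD !subrr re_ip0. Qed.

Lemma re_ipB x y z : re_ip (x - y) z = re_ip x z - re_ip y z.
Proof. by rewrite re_ipD re_ipN. Qed.

Lemma re_ipDr x y z : re_ip z (x + y) = re_ip z x + re_ip z y.
Proof. by rewrite re_ipC re_ipD !(re_ipC z). Qed.

Lemma re_ipNr x z : re_ip z (- x) = - re_ip z x.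
Proof. by rewrite re_ipC re_ipN re_ipC. Qed.

Lemma re_ipBr x y z : re_ip z (x - y) = re_ip z x - re_ip z y.
Proof. by rewrite re_ipDr re_ipNr. Qed.

Lemma re_ipZr a x z : re_ip z (rscale a x) = a * re_ip z x.
Proof. by rewrite re_ipC re_ipZ re_ipC. Qed.

Lemma re_ip0r z : re_ip z 0 = 0.
Proof. by rewrite re_ipC re_ip0. Qed.

Lemma re_ip_ge0 x : 0 <= re_ip x x.
Proof. by case: ip_inner => _ _ pos _; move: (pos x); rewrite lecE => /andP[]. Qed.

Lemma re_ip_eq0 x : re_ip x x = 0 -> x = 0.
Proof.
case: ip_inner => _ _ pos def re0; apply: def.
by move: (ger0_Im (pos x)) re0; rewrite /cRe; case: (ip x x) => a b /= -> ->.
Qed.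

Lemma re_ip_eq (a b : V) : (forall y, re_ip a y = re_ip b y) -> a = b.
Proof. by move=> eq_ab; apply/subr0_eq/re_ip_eq0; rewrite re_ipB eq_ab subrr. Qed.

Lemma hnorm_ge0 x : 0 <= hn x.
Proof. exact: sqrtr_ge0. Qed.

Lemma hnorm_sqr x : hn x ^+ 2 = re_ip x x.
Proof. by rewrite /hnorm sqr_sqrtr // re_ip_ge0. Qed.

Lemma hnorm_eq0 x : hn x = 0 -> x = 0.
Proof. by move=> x0; apply: re_ip_eq0; rewrite -hnorm_sqr x0 expr0n. Qed.

Lemma hnorm0 : hn 0 = 0.
Proof. by rewrite /hnorm re_ip0 sqrtr0. Qed.

Lemma hnormN x : hn (- x) = hn x.
Proof. by rewrite /hnorm re_ipN re_ipNr opprK. Qed.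

Lemma hnormB x y : hn (x - y) = hn (y - x).
Proof. by rewrite -hnormN opprB. Qed.

Lemma hnormZ a x : hn (rscale a x) = `|a| * hn x.
Proof.
by rewrite /hnorm re_ipZ re_ipZr mulrA -expr2 sqrtrM ?sqrtr_sqr // sqr_ge0.
Qed.

(* Nonnegativity of [<a x - b y, a x - b y>] with [a = |y|], [b = |x|]. *)
Lemma cauchy_schwarz x y : re_ip x y <= hn x * hn y.
Proof.
have [/hnorm_eq0->|nx0] := eqVneq (hn x) 0; first by rewrite re_ip0 hnorm0 mul0r.
have [/hnorm_eq0->|ny0] := eqVneq (hn y) 0; first by rewrite re_ip0r hnorm0 mulr0.
have nx_gt0 : 0 < hn x by rewrite lt0r nx0 hnorm_ge0.
have ny_gt0 : 0 < hn y by rewrite lt0r ny0 hnorm_ge0.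
have := re_ip_ge0 (rscale (hn y) x - rscale (hn x) y).
rewrite !(re_ipB, re_ipBr, re_ipZ, re_ipZr) (re_ipC y x) -!hnorm_sqr !expr2.
move=> ge0; have nxy_gt0 : 0 < hn x * hn y by rewrite mulr_gt0.
nra.
Qed.

Lemma cauchy_schwarz_norm x y : `|re_ip x y| <= hn x * hn y.
Proof.
have := cauchy_schwarz (- x) y; rewrite re_ipN hnormN => le_N.
by rewrite ler_norml cauchy_schwarz andbT lerNl.
Qed.

Lemma hnormD x y : hn (x + y) <= hn x + hn y.
Proof.
rewrite -(ler_pXn2r (n := 2)) ?nnegrE ?addr_ge0 ?hnorm_ge0 //.
rewrite hnorm_sqr re_ipD !re_ipDr (re_ipC y x) sqrrD -!hnorm_sqr.
by have := cauchy_schwarz x y; lra.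
Qed.

Lemma hclosure_le0 (f : V -> R) (L : R) (S : set V) :
  0 <= L -> (forall x y, f x <= f y + L * hn (x - y)) ->
  (forall s, S s -> f s <= 0) -> forall w, hclosure ip S w -> f w <= 0.
Proof.
move=> L_ge0 f_lip f_le0 w [u [Su u_to_w]].
apply/ler_addgt0Pr => e e_gt0; rewrite add0r.
have L1_gt0 : 0 < L + 1 by rewrite ltr_wpDl.
have [N /(_ N (leqnn N))] := u_to_w _ (divr_gt0 e_gt0 L1_gt0).
rewrite hnormB; set d := e / (L + 1) => close.
have e_eq : d * (L + 1) = e by rewrite /d mulfVK ?gt_eqF.
have := f_le0 _ (Su N); have := f_lip w (u N); nra.
Qed.

Lemma hclosure_re_ip_eq0 (z : V) (S : set V) :
  (forall s, S s -> re_ip z s = 0) -> forall w, hclosure ip S w -> re_ip z w = 0.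
Proof.
move=> zS w Sw; apply/normr0_eq0/le_anti; rewrite normr_ge0 andbT.
apply: (@hclosure_le0 (fun w => `|re_ip z w|) (hn z) S) => //.
- exact: hnorm_ge0.
- move=> x y; rewrite -[x](subrK y) re_ipDr addrK.
  by apply: le_trans (ler_normD _ _) _; rewrite addrC lerD2l cauchy_schwarz_norm.
- by move=> s /zS ->; rewrite normr0.
Qed.

Lemma subset_hclosure (S : set V) : S `<=` hclosure ip S.
Proof.
move=> w Sw; exists (fun _ => w); split => // e e_gt0.
by exists 0%N => n _; rewrite subrr hnorm0.
Qed.

Section Projection.
Variables (E : V -> V) (H : set V).
Hypothesis E_proj : real_orth_proj_onto ip E H.

Lemma projD x y : E (x + y) = E x + E y.
Proof. by case: E_proj => [[]]. Qed.

Lemma projZ a x : E (rscale a x) = rscale a (E x).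
Proof. by case: E_proj => [[]]. Qed.

Lemma proj0 : E 0 = 0.
Proof. by apply/(addrI (E 0)); rewrite -projD !addr0. Qed.

Lemma projN x : E (- x) = - E x.
Proof. by apply/eqP; rewrite -addr_eq0 -projD addNr proj0. Qed.

Lemma projB x y : E (x - y) = E x - E y.
Proof. by rewrite projD projN. Qed.

Lemma projK x : E (E x) = E x.
Proof. by case: E_proj. Qed.

Lemma proj_sa x y : re_ip (E x) y = re_ip x (E y).
Proof. by case: E_proj. Qed.

Lemma proj_mem x : H (E x).
Proof. by case: E_proj => _ _ _ <-; exists x. Qed.

Lemma proj_mem0 : H 0.
Proof. by rewrite -proj0; apply: proj_mem. Qed.

Lemma proj_id h : H h -> E h = h.
Proof. by case: E_proj => _ _ _ <- [y _ <-]; rewrite projK. Qed.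

Lemma re_ip_proj x : re_ip (E x) (E x) = re_ip x (E x).
Proof. by rewrite proj_sa projK. Qed.

Lemma proj_pythagoras h x :
  H h -> hn (h + (x - E x)) ^+ 2 = hn h ^+ 2 + hn (x - E x) ^+ 2.
Proof.
move=> Hh; have orth : re_ip h (x - E x) = 0.
  by rewrite -(proj_id Hh) proj_sa projB projK subrr re_ip0r.
move: orth; set y := x - E x => orth.
by rewrite !hnorm_sqr re_ipD !(re_ipDr h y) orth (re_ipC y h) orth addr0 add0r.
Qed.

Lemma hnorm_sqr_proj_compl x : hn (x - E x) ^+ 2 = hn x ^+ 2 - hn (E x) ^+ 2.
Proof.
have := proj_pythagoras x (proj_mem x); rewrite addrC subrK => ->.
by rewrite addrAC subrr add0r.
Qed.

Lemma hnorm_proj_le x : hn (E x) <= hn x.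
Proof.
rewrite -(ler_pXn2r (n := 2)) ?nnegrE ?hnorm_ge0 // -subr_ge0.
by rewrite -hnorm_sqr_proj_compl sqr_ge0.
Qed.

Lemma proj_le_rperpP (T : V -> V) : proj_le T (rperp E) <-> forall x, E (T x) = 0.
Proof.
split=> [TE x | ET0 _ [x _ <-]].
  by have [y _ <-] := TE (T x) (ex_intro2 _ _ x I erefl); rewrite projB projK subrr.
by exists (T x) => //; rewrite /rperp ET0 subr0.
Qed.

Lemma proj_le_symp_i (T : V -> V) : proj_le T (symp E) -> forall x, E ('i%C *: T x) = 0.
Proof.
move=> TE x; have [y _ <-] := TE (T x) (ex_intro2 _ _ x I erefl).
by rewrite /symp scalerDr scalerA -expr2 sqr_i scaleN1r projB projK subrr.
Qed.

End Projection.

Section ProjectionPair.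
Variables (E F : V -> V) (HE HF : set V).
Hypotheses (E_proj : real_orth_proj_onto ip E HE)
  (F_proj : real_orth_proj_onto ip F HF).

Lemma proj_comp_sub : HE `<=` HF -> forall x, E (F x) = E x.
Proof.
move=> sEF x; apply: re_ip_eq => y.
rewrite (proj_sa E_proj) (proj_sa F_proj) (proj_id F_proj (sEF _ (proj_mem E_proj y))).
by rewrite (proj_sa E_proj).
Qed.

Lemma proj_comp_eq0C : (forall x, F (E x) = 0) -> forall x, E (F x) = 0.
Proof.
move=> FE0 x; apply: re_ip_eq => y.
by rewrite (proj_sa E_proj) (proj_sa F_proj) FE0 re_ip0r re_ip0.
Qed.

End ProjectionPair.

Lemma proj_eq0_dense (F : V -> V) (HF S : set V) :
  real_orth_proj_onto ip F HF -> hclosure ip S = setT ->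
  (forall s, S s -> F s = 0) -> F = (fun _ => 0).
Proof.
move=> F_proj S_dense FS0; apply: funext => x; apply: re_ip_eq0.
have Fx_orth s : S s -> re_ip (F x) s = 0.
  by move=> Ss; rewrite (proj_sa F_proj) FS0 ?re_ip0r.
by apply: (hclosure_re_ip_eq0 Fx_orth); rewrite S_dense.
Qed.

Section OperatorNorm.
Variables (T : V -> V) (K : R).
Hypotheses (K_ge0 : 0 <= K) (T_bounded : forall x, hn (T x) <= K * hn x).

Lemma opnorm_le : opnorm ip T <= K.
Proof.
apply: ge_sup; first by exists (hn (T 0)), 0 => //=; rewrite hnorm0.
move=> _ [x x_le1 <-]; apply: le_trans (T_bounded x) _.
by rewrite -[leRHS]mulr1; apply: ler_wpM2l.
Qed.

Lemma hnorm_le_opnorm_unit x : hn x <= 1 -> hn (T x) <= opnorm ip T.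
Proof.
move=> x_le1; apply: ub_le_sup; last by exists x.
exists K => _ [y y_le1 <-]; apply: le_trans (T_bounded y) _.
by rewrite -[leRHS]mulr1; apply: ler_wpM2l.
Qed.

Lemma opnorm_ge0 : 0 <= opnorm ip T.
Proof.
have := hnorm_le_opnorm_unit (x := 0); rewrite hnorm0 ler01 => /(_ isT).
exact/le_trans/hnorm_ge0.
Qed.

Lemma hnorm_le_opnorm : real_linear T -> forall x, hn (T x) <= opnorm ip T * hn x.
Proof.
move=> [TD TZ] x; have [/hnorm_eq0->|x_neq0] := eqVneq (hn x) 0.
  have T0 : T 0 = 0 by apply/(addrI (T 0)); rewrite -TD !addr0.
  by rewrite T0 hnorm0 mulr0.
have x_gt0 : 0 < hn x by rewrite lt0r x_neq0 hnorm_ge0.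
have := hnorm_le_opnorm_unit (x := rscale (hn x)^-1 x).
rewrite TZ !hnormZ ger0_norm ?invr_ge0 ?hnorm_ge0 // mulVf // => /(_ (lexx _)).
by rewrite mulrC ler_pdivrMr.
Qed.

End OperatorNorm.

End InnerProduct.

Section ProjectionSum.
Variables (R : realType) (V : lmodType R[i]) (ip : V -> V -> R[i]).
Hypothesis ip_inner : is_inner_product ip.
Variables (H1 H2 : set V) (E1 E2 E12 : V -> V).
Hypotheses (pE1 : real_orth_proj_onto ip E1 H1) (pE2 : real_orth_proj_onto ip E2 H2)
  (pE12 : real_orth_proj_onto ip E12 (closed_real_span2 ip H1 H2)).

Local Notation re_ip x y := (cRe (ip x y)).
Local Notation hn := (hnorm ip).
Local Notation H12 := (closed_real_span2 ip H1 H2).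
Local Notation X := (Xop E1 E2 E12).

Lemma add_mem_span u v : H1 u -> H2 v -> H12 (u + v).
Proof. by move=> H1u H2v; apply: (subset_hclosure ip_inner); exists u => //; exists v. Qed.

Lemma H1_sub_span : H1 `<=` H12.
Proof. by move=> u H1u; rewrite -[u]addr0; apply: add_mem_span (proj_mem0 pE2). Qed.

Lemma H2_sub_span : H2 `<=` H12.
Proof. by move=> v H2v; rewrite -[v]add0r; apply: add_mem_span (proj_mem0 pE1) _. Qed.

Lemma XE1 x : X (E1 x) = E2 (E1 x).
Proof.
rewrite /Xop (projK pE1) (proj_id pE12 (H1_sub_span (proj_mem pE1 x))).
by rewrite addrC addKr.
Qed.

Lemma XE2 x : X (E2 x) = E1 (E2 x).
Proof. by rewrite /Xop (projK pE2) (proj_id pE12 (H2_sub_span (proj_mem pE2 x))) addrK. Qed.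

Lemma XE12 x : X (E12 x) = X x.
Proof.
rewrite /Xop (projK pE12) (proj_comp_sub ip_inner pE1 pE12 H1_sub_span).
by rewrite (proj_comp_sub ip_inner pE2 pE12 H2_sub_span).
Qed.

Lemma X_add_mem u v : H1 u -> H2 v -> X (u + v) = E2 u + E1 v.
Proof.
move=> H1u H2v; rewrite /Xop (proj_id pE12 (add_mem_span H1u H2v)).
rewrite (projD pE1) (projD pE2) (proj_id pE1 H1u) (proj_id pE2 H2v).
by rewrite [E2 u + v]addrC addrACA (addrC (u + v)) addrK addrC.
Qed.

Lemma X_real_linear : real_linear X.
Proof.
split=> [x y | a x]; rewrite /Xop.
  rewrite (projD pE1) (projD pE2) (projD pE12).
  by rewrite (addrACA (E1 x)) opprD (addrACA (E1 x + E2 x)).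
by rewrite (projZ pE1) (projZ pE2) (projZ pE12) /rscale -scalerDr -scalerBr.
Qed.

Lemma X_re_selfadjoint : re_selfadjoint ip X.
Proof.
move=> x y; rewrite /Xop (re_ipB ip_inner) (re_ipD ip_inner).
rewrite (re_ipBr ip_inner) (re_ipDr ip_inner).
by rewrite (proj_sa pE1) (proj_sa pE2) (proj_sa pE12).
Qed.

Lemma hnorm_X_le3 x : hn (X x) <= 3%:R * hn x.
Proof.
rewrite /Xop; apply: le_trans (hnormD ip_inner _ _) _.
apply: le_trans (lerD (hnormD ip_inner _ _) (lexx _)) _; rewrite (hnormN ip_inner).
have := hnorm_proj_le ip_inner pE1 x; have := hnorm_proj_le ip_inner pE2 x.
have := hnorm_proj_le ip_inner pE12 x; lra.
Qed.

Section NormBound.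
Variable c : R.
Hypotheses (c_ge0 : 0 <= c) (E1E2_le : forall x, hn (E1 (E2 x)) <= c * hn x).

(* On [H1], [E2] agrees with [E2 E1], the adjoint of [E1 E2]. *)
Lemma hnorm_E2_le h : H1 h -> hn (E2 h) <= c * hn h.
Proof.
move=> H1h; have [E2h0|E2h_neq0] := eqVneq (hn (E2 h)) 0.
  by rewrite E2h0 mulr_ge0 ?hnorm_ge0.
have E2h_gt0 : 0 < hn (E2 h) by rewrite lt0r E2h_neq0 hnorm_ge0.
rewrite -(ler_pM2r E2h_gt0) -expr2 mulrAC (hnorm_sqr ip_inner).
rewrite (re_ip_proj pE2) -{1}(proj_id pE1 H1h) (proj_sa pE1).
apply: le_trans (cauchy_schwarz ip_inner _ _) _; rewrite mulrC.
by apply: ler_wpM2r; [exact: hnorm_ge0 | have := E1E2_le (E2 h); rewrite (projK pE2)].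
Qed.

Lemma hnorm_E1_gap v : H2 v ->
  hn (E1 v) ^+ 2 - hn (E2 (E1 v)) ^+ 2 <= c ^+ 2 * (hn v ^+ 2 - hn (E1 v) ^+ 2).
Proof.
move=> H2v; apply: sqr_gap_le; rewrite ?hnorm_ge0 ?(hnorm_proj_le ip_inner pE1) //.
- rewrite (hnorm_sqr ip_inner) (re_ip_proj pE1) -{1}(proj_id pE2 H2v) (proj_sa pE2).
  exact: cauchy_schwarz.
- by rewrite -{1}(proj_id pE2 H2v); apply: E1E2_le.
Qed.

Lemma hnorm_X_add_mem u v : H1 u -> H2 v -> hn (X (u + v)) <= c * hn (u + v).
Proof.
move=> H1u H2v; set w := u + E1 v.
have H1w : H1 w by rewrite /w -(proj_id pE1 H1u) -(projD pE1); exact: (proj_mem pE1).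
have X_split : X (u + v) = E2 w + (E1 v - E2 (E1 v)).
  by rewrite X_add_mem // /w (projD pE2) addrACA subrr addr0.
have uv_split : u + v = w + (v - E1 v) by rewrite /w addrACA subrr addr0.
rewrite -(ler_pXn2r (n := 2)) ?nnegrE ?mulr_ge0 ?hnorm_ge0 //.
rewrite X_split uv_split exprMn (proj_pythagoras ip_inner pE2 _ (proj_mem pE2 w)).
rewrite (proj_pythagoras ip_inner pE1 _ H1w) (hnorm_sqr_proj_compl ip_inner pE2).
rewrite (hnorm_sqr_proj_compl ip_inner pE1).
have E2w_le : hn (E2 w) ^+ 2 <= c ^+ 2 * hn w ^+ 2.
  by rewrite -exprMn ler_pXn2r ?nnegrE ?mulr_ge0 ?hnorm_ge0 ?hnorm_E2_le.
by have := hnorm_E1_gap H2v; lra.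
Qed.

Lemma hnorm_X_span w : H12 w -> hn (X w) <= c * hn w.
Proof.
move=> H12w; rewrite -subr_le0.
apply: (hclosure_le0 ip_inner (f := fun w => hn (X w) - c * hn w)
  (L := 3%:R + c) _ _ _ H12w).
- by rewrite addr_ge0.
- move=> x y /=.
  have y_le : hn y <= hn x + hn (x - y).
    by have := hnormD ip_inner x (y - x); rewrite (addrC x) subrK hnormB.
  have Xx_le : hn (X x) <= hn (X y) + 3%:R * hn (x - y).
    have -> : X x = X y + X (x - y) by rewrite -(proj1 X_real_linear) addrC subrK.
    by apply: le_trans (hnormD ip_inner _ _) _; rewrite lerD2l hnorm_X_le3.
  by have := ler_wpM2l c_ge0 y_le; lra.
- by move=> _ [u H1u [v H2v <-]]; rewrite subr_le0 hnorm_X_add_mem.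
Qed.

Lemma hnorm_X_le x : hn (X x) <= c * hn x.
Proof.
rewrite -XE12; apply: le_trans (hnorm_X_span (proj_mem pE12 x)) _.
by apply: ler_wpM2l => //; apply: hnorm_proj_le pE12 x.
Qed.

End NormBound.

Lemma hnorm_E1E2_le x : hn ((E1 \o E2) x) <= 1 * hn x.
Proof.
rewrite mul1r; apply: le_trans (hnorm_proj_le ip_inner pE1 _) _.
exact: hnorm_proj_le pE2 x.
Qed.

Lemma X_re_selfadjoint_contraction : re_selfadjoint_contraction ip X.
Proof.
split; [exact: X_real_linear | exact: X_re_selfadjoint | move=> x].
by rewrite -[leRHS]mul1r; apply: hnorm_X_le => //; apply: hnorm_E1E2_le.
Qed.

Lemma opnorm_X : opnorm ip X = opnorm ip (E1 \o E2).
Proof.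
have E1E2_lin : real_linear (E1 \o E2).
  by split=> [x y | a x] /=; rewrite ?(projD pE2, projD pE1) ?(projZ pE2, projZ pE1).
have c_ge0 := opnorm_ge0 ip_inner ler01 hnorm_E1E2_le.
have X_le := hnorm_X_le c_ge0 (hnorm_le_opnorm ip_inner ler01 hnorm_E1E2_le E1E2_lin).
apply/le_anti; rewrite (opnorm_le ip_inner c_ge0 X_le).
apply: (opnorm_le ip_inner (opnorm_ge0 ip_inner c_ge0 X_le)) => x /=.
rewrite -XE2; apply: le_trans (hnorm_le_opnorm ip_inner c_ge0 X_le X_real_linear _) _.
by apply: ler_wpM2l; [exact: opnorm_ge0 c_ge0 X_le | exact: hnorm_proj_le pE2 x].
Qed.

Lemma X_eq0P : X = (fun _ => 0) <-> forall x, E2 (E1 x) = 0.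
Proof.
split=> [X0 x | E2E1_0]; first by rewrite -XE1 X0.
have E1E2_0 := proj_comp_eq0C ip_inner pE1 pE2 E2E1_0.
apply: funext => x; apply: (hnorm_eq0 ip_inner); apply/le_anti.
rewrite hnorm_ge0 andbT -(mul0r (hn x)).
by apply: hnorm_X_le => // y; rewrite E1E2_0 (hnorm0 ip_inner) mul0r.
Qed.

End ProjectionSum.

Unset Implicit Arguments.
Set Strict Implicit.

Theorem proposition5p4 (R : realType) (V : lmodType R[i])
  (ip : V -> V -> R[i]) (hV : is_hilbert ip)
  (H1 H2 : set V) (E1 E2 E12 : V -> V)
  (cH1 : closed_real_subspace ip H1) (cH2 : closed_real_subspace ip H2)
  (pE1 : real_orth_proj_onto ip E1 H1) (pE2 : real_orth_proj_onto ip E2 H2)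
  (pE12 : real_orth_proj_onto ip E12 (closed_real_span2 ip H1 H2)) :
  (* (a) *)
  (re_selfadjoint_contraction ip (Xop E1 E2 E12) /\
   opnorm ip (Xop E1 E2 E12) = opnorm ip (E1 \o E2)) /\
  (* (b) *)
  ((Xop E1 E2 E12 = (fun _ => 0)) <-> proj_le E1 (rperp E2)) /\
  (* (c) *)
  (standard ip E1 -> proj_le E1 (symp E2) ->
     (Xop E1 E2 E12 = (fun _ => 0) <-> E2 = (fun _ => 0))).
Proof.
have [ip_inner _] := hV.
have X0P := X_eq0P ip_inner pE1 pE2 pE12.
split; [split | split].
- exact: (X_re_selfadjoint_contraction ip_inner pE1 pE2 pE12).
- exact: (opnorm_X ip_inner pE1 pE2 pE12).
- by rewrite X0P (proj_le_rperpP pE2 E1).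
- move=> [_ H1_dense] /(proj_le_symp_i pE2) E2iE1_0; rewrite X0P.
  split=> [E2E1_0 | -> //]; apply: (proj_eq0_dense ip_inner pE2 H1_dense).
  by move=> _ [_ [x _ <-] [_ [y _ <-] <-]]; rewrite (projD pE2) E2E1_0 E2iE1_0 addr0.
Qed.
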